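(* Let $H\ge1$, $W_j\in\mathbb{R}^{d_j\times d_{j-1}}$ for $j\in[H+1]$ be fixed matrices $\hat W_j$, write $\hat W_{i:j}=\hat W_i\cdots\hat W_j$ for $i\ge j$ and $\hat W_{j-1:j}=I$, fix $j^*\in[H+1]$ and $\epsilon>0$. Suppose $A:=\hat W_{H+1:j^*+1}$ has full row rank and $B:=\hat W_{j^*-1:1}$ has full column rank. Then any $R\in\mathbb{R}^{d_{H+1}\times d_0}$ satisfying $\|R-\hat W_{H+1:1}\|_F\le\sigma_{\min}(A)\sigma_{\min}(B)\epsilon$ can be written as $R=V_{H+1}V_H\cdots V_1$, where $$V_{j^*}=\hat W_{j^*}+A^T(AA^T)^{-1}(R-\hat W_{H+1:1})(B^TB)^{-1}B^T$$ and $V_j=\hat W_j$ for $j\ne j^*$; moreover $\|V_j-\hat W_j\|_F\le\epsilon$ for all $j$.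
   Context: $\sigma_{\min}(M)$ denotes the smallest singular value of $M$ (equivalently, for $A$ of full row rank, its $\mathrm{rank}$-th singular value, which is positive; similarly for $B$ of full column rank). $\|\cdot\|_F$ is the Frobenius norm. *)

From HB Require Import structures.
From mathcomp Require Import all_boot all_order all_algebra.
From mathcomp Require Import all_classical all_reals.
Set Implicit Arguments. Unset Strict Implicit. Unset Printing Implicit Defensive.
Import Order.TTheory GRing.Theory Num.Theory.
Local Open Scope ring_scope.
Local Open Scope classical_set_scope.

Definition frob {R : realType} {m n : nat} (M : 'M[R]_(m, n)) : R :=
  Num.sqrt (\sum_(i < m) \sum_(j < n) M i j ^+ 2).

Definition lambda_min {R : realType} {n : nat} (S : 'M[R]_n) : R :=
  inf [set a : R | eigenvalue S a].

(* Smallest singular value of M : m x n, i.e. the min(m,n)-th singular value: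
   square root of the smallest eigenvalue of M M^T (if m <= n) or M^T M. *)
Definition sigma_min {R : realType} {m n : nat} (M : 'M[R]_(m, n)) : R :=
  if (m <= n)%N then Num.sqrt (lambda_min (M *m M^T))
  else Num.sqrt (lambda_min (M^T *m M)).

Section Products.
Variables (R : realType) (d : nat -> nat).
(* Layer matrices, indexed as in the paper: W j : d_j x d_{j-1} (j >= 1). *)
Variable W : forall j : nat, 'M[R]_(d j, d j.-1).

Fixpoint pre (j : nat) : 'M[R]_(d j, d 0) :=
  match j with
  | 0 => 1%:M
  | j'.+1 => W j'.+1 *m pre j'
  end.

(* seg j n = W_{j+n} ... W_{j+1}  =  W_{j+n : j+1}  (seg j 0 = I). *)
Fixpoint seg (j n : nat) : 'M[R]_(d (n + j), d j) :=
  match n with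
  | 0 => 1%:M
  | n'.+1 => W (n' + j).+1 *m seg j n'
  end.
End Products.

Lemma top_eq (d : nat -> nat) (H js : nat) (h : (js <= H.+1)%N) :
  d (H.+1 - js + js)%N = d H.+1.
Proof. by rewrite subnK. Qed.

(* W_{H+1 : js+1}, as a d_{H+1} x d_{js} matrix. *)
Definition topW {R : realType} (d : nat -> nat) (W : forall j, 'M[R]_(d j, d j.-1))
  (H js : nat) (h : (js <= H.+1)%N) : 'M[R]_(d H.+1, d js) :=
  castmx (@top_eq d H js h, erefl) (seg W js (H.+1 - js)).

(* Write A := W_{H+1:j*+1}, B := W_{j*-1:1} and D := R - W_{H+1:1}.  Since A A^T and B^T B
   are invertible, Y := A^T (A A^T)^-1 D (B^T B)^-1 B^T satisfies A Y B = D, so replacing W_{j*}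
   by W_{j*} + Y turns the product into R.  For the norm, |x (A A^T)^-1 A|^2 <= |x|^2 / lambda_min (A A^T)
   row by row, lambda_min (A A^T) = sigma_min(A)^2 and sigma_min(B)^2 <= lambda_min (B^T B), so
   sigma_min(A)^2 sigma_min(B)^2 |Y|_F^2 <= |D|_F^2.  Without a spectral theorem, lambda_min of a
   positive semidefinite S is identified with the infimum mu of its Rayleigh quotient: S - mu I
   cannot be invertible, because invertible positive semidefinite forms are coercive. *)

From HB Require Import structures.
From mathcomp Require Import all_boot all_order all_algebra.
From mathcomp Require Import all_classical all_reals.
From mathcomp Require Import ring lra.
Set Implicit Arguments. Unset Strict Implicit. Unset Printing Implicit Defensive.
Import Order.TTheory GRing.Theory Num.Theory.
Local Open Scope ring_scope.

Section DotProduct.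
Variable R : realType.
Implicit Types (n : nat).

Definition dot n (x y : 'rV[R]_n) : R := (x *m y^T) 0 0.

Lemma dotE n (x y : 'rV[R]_n) : dot x y = \sum_i x 0 i * y 0 i.
Proof. by rewrite /dot mxE; apply: eq_bigr => i _; rewrite mxE. Qed.

Lemma dotC n (x y : 'rV[R]_n) : dot x y = dot y x.
Proof. by rewrite !dotE; apply: eq_bigr => i _; rewrite mulrC. Qed.

Lemma dotDl n (x y z : 'rV[R]_n) : dot (x + y) z = dot x z + dot y z.
Proof. by rewrite /dot mulmxDl mxE. Qed.

Lemma dotDr n (x y z : 'rV[R]_n) : dot z (x + y) = dot z x + dot z y.
Proof. by rewrite dotC dotDl !(dotC z). Qed.

Lemma dotBl n (x y z : 'rV[R]_n) : dot (x - y) z = dot x z - dot y z.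
Proof. by rewrite /dot mulmxBl !mxE. Qed.

Lemma dotZl n (a : R) (x z : 'rV[R]_n) : dot (a *: x) z = a * dot x z.
Proof. by rewrite /dot -scalemxAl mxE. Qed.

Lemma dotZr n (a : R) (x z : 'rV[R]_n) : dot z (a *: x) = a * dot z x.
Proof. by rewrite dotC dotZl dotC. Qed.

Lemma dot0l n (z : 'rV[R]_n) : dot 0 z = 0.
Proof. by rewrite /dot mul0mx mxE. Qed.

Lemma dotMl n p (x : 'rV[R]_n) (y : 'rV[R]_p) (M : 'M[R]_(n, p)) :
  dot (x *m M) y = dot x (y *m M^T).
Proof. by rewrite /dot trmx_mul trmxK mulmxA. Qed.

Lemma dot_ge0 n (x : 'rV[R]_n) : 0 <= dot x x.
Proof. by rewrite dotE sumr_ge0 // => i _; rewrite -expr2 sqr_ge0. Qed.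

Lemma dot_eq0 n (x : 'rV[R]_n) : (dot x x == 0) = (x == 0).
Proof.
apply/idP/idP => [|/eqP->]; last by rewrite dot0l.
rewrite dotE psumr_eq0 => [/allP x0|i _]; last by rewrite -expr2 sqr_ge0.
apply/eqP/rowP => i; have := x0 i (mem_index_enum _).
by rewrite /= -expr2 sqrf_eq0 mxE => /eqP.
Qed.

Lemma dot_gt0 n (x : 'rV[R]_n) : x != 0 -> 0 < dot x x.
Proof. by rewrite lt_def dot_eq0 dot_ge0 => ->. Qed.

Lemma rowv0 n (x : 'rV[R]_n) : n = 0%N -> x = 0.
Proof. by move=> n0; subst n; apply/rowP => -[]. Qed.

Lemma cauchy_schwarz_form n (M : 'M[R]_n) (x y : 'rV[R]_n) :
  M^T = M -> (forall z, 0 <= dot (z *m M) z) ->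
  dot (x *m M) y ^+ 2 <= dot (x *m M) x * dot (y *m M) y.
Proof.
move=> M_sym M_psd.
set a := dot (x *m M) x; set b := dot (x *m M) y; set c := dot (y *m M) y.
have yx : dot (y *m M) x = b by rewrite dotMl M_sym dotC.
(* q(x + t y) >= 0 for every t forces b^2 <= a c *)
have quad t : 0 <= a + 2 * t * b + t ^+ 2 * c.
  have := M_psd (x + t *: y).
  rewrite mulmxDl -scalemxAl !dotDl !dotDr !dotZl !dotZr -/a -/b -/c yx.
  by congr (_ <= _); ring.
have [c0|c_neq0] := eqVneq c 0.
  rewrite c0 mulr0; have [->|b_neq0] := eqVneq b 0; first by rewrite expr0n.
  have := quad (- (a + 1) / (2 * b)); rewrite c0 mulr0 addr0.
  have -> : 2 * (- (a + 1) / (2 * b)) * b = - (a + 1) by field; rewrite b_neq0.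
  lra.
have c_gt0 : 0 < c by rewrite lt_def c_neq0 M_psd.
have := quad (- b / c).
have -> : a + 2 * (- b / c) * b + (- b / c) ^+ 2 * c = a - b ^+ 2 / c by field.
by rewrite subr_ge0 ler_pdivrMr // mulrC.
Qed.

Lemma cauchy_schwarz n (x y : 'rV[R]_n) : dot x y ^+ 2 <= dot x x * dot y y.
Proof.
have := @cauchy_schwarz_form n 1%:M x y (trmx1 _ _).
by rewrite !mulmx1; apply => z; rewrite mulmx1 dot_ge0.
Qed.

Lemma dot_mulmx_bound n p (N : 'M[R]_(n, p)) :
  exists2 K, 0 < K & forall x, dot (x *m N) (x *m N) <= K * dot x x.
Proof.
exists (1 + \sum_j dot (row j N^T) (row j N^T)).
  by rewrite ltr_pwDl // sumr_ge0 // => j _; apply: dot_ge0.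
move=> x; have xN j : (x *m N) 0 j = dot x (row j N^T).
  by rewrite dotE mxE; apply: eq_bigr => i _; rewrite !mxE.
rewrite dotE mulrDl mul1r mulr_suml addrC -[leLHS]addr0 lerD ?dot_ge0 //.
by apply: ler_sum => j _; rewrite xN -expr2 mulrC cauchy_schwarz.
Qed.

(* With y := x M^-1, Cauchy-Schwarz for M gives |x|^4 <= (y M y^T) (x M x^T), while
   y M y^T = <x, y> <= sqrt K |x|^2 by boundedness of M^-1. *)
Lemma psd_unit_coercive n (M : 'M[R]_n) :
  M^T = M -> (forall z, 0 <= dot (z *m M) z) -> M \in unitmx ->
  exists2 K, 0 < K & forall x, dot x x <= K * dot (x *m M) x.
Proof.
move=> M_sym M_psd M_unit; have [K K_gt0 bound] := dot_mulmx_bound (invmx M).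
exists (1 + K); first by rewrite ltr_pwDl // ltW.
move=> x; set y := x *m invmx M.
have yM : y *m M = x by rewrite mulmxKV.
set s := dot x x; set r := dot (x *m M) x; set p := dot (y *m M) y.
have s_ge0 : 0 <= s by apply: dot_ge0.
have r_ge0 : 0 <= r by apply: M_psd.
have p_ge0 : 0 <= p by apply: M_psd.
have sqr_s_le : s ^+ 2 <= p * r.
  by have := cauchy_schwarz_form y x M_sym M_psd; rewrite [in X in X ^+ 2]yM.
have sqr_p_le : p ^+ 2 <= K * s ^+ 2.
  rewrite /p yM; apply: (le_trans (cauchy_schwarz x y)).
  by rewrite expr2 mulrCA ler_wpM2l ?bound.
have sqr_s_le_r : s ^+ 2 <= K * r ^+ 2.
  have [s0|s_gt0] := eqVneq s 0; first by rewrite s0 expr0n mulr_ge0 ?sqr_ge0 ?ltW.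
  rewrite -(@ler_pM2l _ (s ^+ 2)) ?exprn_gt0 ?lt_def ?s_gt0 //.
  apply: (le_trans (y := (p * r) ^+ 2)); first by rewrite [leRHS]expr2 ler_pM ?sqr_ge0.
  by rewrite exprMn [leRHS]mulrCA [leRHS]mulrA ler_wpM2r ?sqr_ge0.
have K1_ge0 : 0 <= 1 + K by rewrite addr_ge0 ?ltW.
rewrite -ler_sqr ?nnegrE ?mulr_ge0 // (le_trans sqr_s_le_r) //.
by rewrite exprMn ler_wpM2r ?sqr_ge0 //; nra.
Qed.

End DotProduct.

Lemma eigenvalueE (R : fieldType) n (S : 'M[R]_n) a :
  eigenvalue S a = ~~ row_free (S - a%:M).
Proof. by rewrite /eigenvalue /eigenspace -kermx_eq0. Qed.

Section Rayleigh.
Variables (R : realType) (n : nat) (S : 'M[R]_n).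
Hypotheses (S_sym : S^T = S) (S_psd : forall z : 'rV_n, 0 <= dot (z *m S) z).
Local Open Scope classical_set_scope.

Definition rayleigh_inf : R :=
  inf [set r | exists2 x : 'rV[R]_n, x != 0 & r = dot (x *m S) x / dot x x].

Lemma rayleigh_inf_le x : rayleigh_inf * dot x x <= dot (x *m S) x.
Proof.
have [->|x_neq0] := eqVneq x 0; first by rewrite dot0l mul0mx dot0l mulr0.
rewrite -ler_pdivlMr ?dot_gt0 //; apply: ge_inf; last by exists x.
by exists 0 => _ [y _ ->]; rewrite divr_ge0 ?dot_ge0.
Qed.

(* If S - mu I were invertible it would be coercive, and mu would not be the infimum. *)
Lemma eigenvalue_rayleigh_inf : (0 < n)%N -> eigenvalue S rayleigh_inf.
Proof.
move=> n_gt0; rewrite eigenvalueE; set mu := rayleigh_inf.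
apply/negP; rewrite row_free_unit => M_unit; set M := S - mu%:M in M_unit.
have qM z : dot (z *m M) z = dot (z *m S) z - mu * dot z z.
  by rewrite mulmxBr mul_mx_scalar dotBl dotZl.
have M_sym : M^T = M by rewrite linearB /= S_sym tr_scalar_mx.
have M_psd z : 0 <= dot (z *m M) z by rewrite qM subr_ge0 rayleigh_inf_le.
have [K K_gt0 coercive] := psd_unit_coercive M_sym M_psd M_unit.
suff : mu + K^-1 <= mu by rewrite gerDl lt_geF // invr_gt0.
apply: lb_le_inf => [|_ [x x_neq0 ->]].
  pose v : 'rV[R]_n := const_mx 1.
  exists (dot (v *m S) v / dot v v), v => //.
  by apply/eqP => /rowP /(_ (Ordinal n_gt0)) /eqP; rewrite !mxE oner_eq0.
have x_gt0 := dot_gt0 x_neq0.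
have -> : dot (x *m S) x / dot x x = dot (x *m M) x / dot x x + mu.
  by rewrite qM mulrBl mulfK ?lt0r_neq0 // subrK.
rewrite addrC lerD2r ler_pdivlMr // -(ler_pM2l K_gt0) mulrA mulfV ?gt_eqF // mul1r.
exact: coercive.
Qed.

Lemma lambda_min_rayleigh : (0 < n)%N -> lambda_min S = rayleigh_inf.
Proof.
move=> n_gt0; set mu := rayleigh_inf.
have mu_lb : lbound [set a | eigenvalue S a] mu.
  move=> a /eigenvalueP [v vS v_neq0].
  by have := rayleigh_inf_le v; rewrite vS dotZl ler_pM2r // dot_gt0.
apply/eqP; rewrite eq_le; apply/andP; split.
  by apply: ge_inf; [exists mu | exact: eigenvalue_rayleigh_inf].
by apply: lb_le_inf => //; exists mu; exact: eigenvalue_rayleigh_inf.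
Qed.

Lemma eigenvalue_lambda_min : (0 < n)%N -> eigenvalue S (lambda_min S).
Proof. by move=> n_gt0; rewrite lambda_min_rayleigh // eigenvalue_rayleigh_inf. Qed.

Lemma lambda_min_le x : lambda_min S * dot x x <= dot (x *m S) x.
Proof.
have [n0|n_gt0] := posnP n; first by rewrite (rowv0 x n0) dot0l mul0mx dot0l mulr0.
by rewrite lambda_min_rayleigh // rayleigh_inf_le.
Qed.

Lemma lambda_min_dim0 : n = 0%N -> lambda_min S = 0.
Proof.
move=> n0; rewrite /lambda_min (_ : [set a | _] = set0) ?inf0 //.
by apply/seteqP; split => a //= /eigenvalueP [v _]; rewrite (rowv0 v n0) eqxx.
Qed.

End Rayleigh.

Section Gram.
Variables (R : realType) (m n : nat) (A : 'M[R]_(m, n)).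

Lemma dot_gram z : dot (z *m (A *m A^T)) z = dot (z *m A) (z *m A).
Proof. by rewrite mulmxA dotMl trmxK. Qed.

Lemma gram_sym : (A *m A^T)^T = A *m A^T.
Proof. by rewrite trmx_mul trmxK. Qed.

Lemma gram_psd z : 0 <= dot (z *m (A *m A^T)) z.
Proof. by rewrite dot_gram dot_ge0. Qed.

Lemma lambda_min_gram_le a : eigenvalue (A *m A^T) a -> lambda_min (A *m A^T) <= a.
Proof.
move=> eig_a; apply: ge_inf eig_a; exists 0 => b /eigenvalueP [v vS v_neq0].
by have := gram_psd v; rewrite vS dotZl pmulr_lge0 // dot_gt0.
Qed.

Lemma lambda_min_gram_ge0 : 0 <= lambda_min (A *m A^T).
Proof.
have [m0|m_gt0] := posnP m; first by rewrite lambda_min_dim0.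
have /eigenvalueP [v vS v_neq0] := eigenvalue_lambda_min gram_sym gram_psd m_gt0.
by have := gram_psd v; rewrite vS dotZl pmulr_lge0 // dot_gt0.
Qed.

End Gram.

Lemma sigma_min_ge0 (R : realType) m n (A : 'M[R]_(m, n)) : 0 <= sigma_min A.
Proof. by rewrite /sigma_min; case: ifP => _; apply: sqrtr_ge0. Qed.

Section RowFree.
Variables (R : realType) (m n : nat) (A : 'M[R]_(m, n)).
Hypothesis A_free : row_free A.

Lemma gram_unit : A *m A^T \in unitmx.
Proof.
rewrite -row_free_unit; apply: contraT => not_free.
have /eigenvalueP [v vS v_neq0] : eigenvalue (A *m A^T) 0.
  by rewrite eigenvalueE raddf0 subr0.
have := dot_gram A v; rewrite vS scale0r dot0l => /esym/eqP.
by rewrite dot_eq0 mulmx_free_eq0 // (negbTE v_neq0).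
Qed.

(* [invmx (A *m A^T) *m A] is the transpose of the right inverse [A^T *m invmx (A *m A^T)] of [A]. *)
Lemma gram_pinv_bound x :
  lambda_min (A *m A^T) *
    dot (x *m invmx (A *m A^T) *m A) (x *m invmx (A *m A^T) *m A) <= dot x x.
Proof.
set l := lambda_min _; set y := x *m invmx _; set P := dot (y *m A) (y *m A).
have yS : y *m (A *m A^T) = x by rewrite mulmxKV ?gram_unit.
have P_xy : P = dot x y by rewrite /P -(dot_gram A) yS.
have ly_le : l * dot y y <= P by rewrite /P -(dot_gram A); exact: lambda_min_le (gram_sym A) (gram_psd A) y.
have l_ge0 : 0 <= l := lambda_min_gram_ge0 A.
have [P0|P_neq0] := eqVneq P 0; first by rewrite P0 mulr0 dot_ge0.
have P_gt0 : 0 < P by rewrite lt_def P_neq0 dot_ge0.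
rewrite -(ler_pM2r P_gt0) -mulrA -expr2 {1}P_xy.
apply: (le_trans (y := l * (dot x x * dot y y))); first by rewrite ler_wpM2l ?cauchy_schwarz.
by rewrite [leLHS]mulrCA ler_wpM2l ?dot_ge0.
Qed.

Lemma sqr_sigma_min_row_free : sigma_min A ^+ 2 = lambda_min (A *m A^T).
Proof.
have m_le_n : (m <= n)%N by rewrite -(eqP A_free) rank_leq_col.
by rewrite /sigma_min m_le_n sqr_sqrtr ?(lambda_min_gram_ge0 A).
Qed.

(* Only the square case is not immediate: an eigenvector [v] of [A *m A^T] yields the eigenvector [v *m A] of [A^T *m A]. *)
Lemma sigma_min_tr_row_free : sigma_min A^T <= sigma_min A.
Proof.
have m_le_n : (m <= n)%N by rewrite -(eqP A_free) rank_leq_col.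
rewrite /sigma_min m_le_n trmxK; case: ifP => // n_le_m.
rewrite ler_sqrt ?(lambda_min_gram_ge0 A) //.
have [m0|m_gt0] := posnP m.
  by rewrite !lambda_min_dim0 //; apply/eqP; rewrite -leqn0 -m0.
have /eigenvalueP [v vS v_neq0] := eigenvalue_lambda_min (gram_sym A) (gram_psd A) m_gt0.
have -> : A^T *m A = A^T *m A^T^T by rewrite trmxK.
apply: lambda_min_gram_le; apply/eigenvalueP.
exists (v *m A); last by rewrite mulmx_free_eq0.
by rewrite trmxK mulmxA -(mulmxA v) vS scalemxAl.
Qed.

End RowFree.

Section Frobenius.
Variable R : realType.

Definition frob2 m n (M : 'M[R]_(m, n)) : R := \sum_i \sum_j M i j ^+ 2.

Lemma frobE m n (M : 'M[R]_(m, n)) : frob M = Num.sqrt (frob2 M).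
Proof. by []. Qed.

Lemma frob2_rows m n (M : 'M[R]_(m, n)) : frob2 M = \sum_i dot (row i M) (row i M).
Proof. by apply: eq_bigr => i _; rewrite dotE; apply: eq_bigr => j _; rewrite !mxE expr2. Qed.

Lemma frob2_ge0 m n (M : 'M[R]_(m, n)) : 0 <= frob2 M.
Proof. by rewrite frob2_rows sumr_ge0 // => i _; apply: dot_ge0. Qed.

Lemma frob2_eq0 m n (M : 'M[R]_(m, n)) : (frob2 M == 0) = (M == 0).
Proof.
rewrite frob2_rows psumr_eq0 => [|i _]; last exact: dot_ge0.
apply/allP/eqP => [rows0|->]; last by move=> i _; rewrite row0 dot0l eqxx.
apply/row_matrixP => i; rewrite row0; apply/eqP; rewrite -dot_eq0.
exact: rows0 (mem_index_enum _).
Qed.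

Lemma frob0 m n : frob (0 : 'M[R]_(m, n)) = 0.
Proof. by rewrite frobE (eqP (_ : frob2 _ == 0)) ?sqrtr0 // frob2_eq0. Qed.

Lemma frob2_tr m n (M : 'M[R]_(m, n)) : frob2 M^T = frob2 M.
Proof. by rewrite /frob2 exchange_big; apply: eq_bigr => i _; apply: eq_bigr => j _; rewrite mxE. Qed.

Lemma frob2_mulmx_le m n p (X : 'M[R]_(m, n)) (N : 'M[R]_(n, p)) s :
  (forall x, s * dot (x *m N) (x *m N) <= dot x x) -> s * frob2 (X *m N) <= frob2 X.
Proof.
move=> N_bound; rewrite !frob2_rows mulr_sumr; apply: ler_sum => i _.
by rewrite row_mul.
Qed.

End Frobenius.

Lemma frob_pinv_le (R : realType) m n p q (A : 'M[R]_(m, n)) (B : 'M[R]_(p, q))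
    (D : 'M[R]_(m, q)) (eps : R) :
  row_free A -> row_free B^T -> 0 <= eps ->
  frob D <= sigma_min A * sigma_min B * eps ->
  frob (A^T *m invmx (A *m A^T) *m D *m invmx (B^T *m B) *m B^T) <= eps.
Proof.
move=> A_free Bt_free eps_ge0 D_le.
set a := sigma_min A; set b := sigma_min B.
set PA := invmx (A *m A^T) *m A; set PB := invmx (B^T *m B) *m B^T.
have Y_eq : A^T *m invmx (A *m A^T) *m D *m invmx (B^T *m B) *m B^T = PA^T *m D *m PB.
  by rewrite /PA /PB trmx_mul trmx_inv gram_sym !mulmxA.
have PA_bound x : a ^+ 2 * dot (x *m PA) (x *m PA) <= dot x x.
  by rewrite /a /PA sqr_sigma_min_row_free // mulmxA; exact: gram_pinv_bound.
have PB_bound x : b ^+ 2 * dot (x *m PB) (x *m PB) <= dot x x.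
  have := gram_pinv_bound Bt_free x.
  rewrite -(sqr_sigma_min_row_free Bt_free) trmxK -mulmxA; apply: le_trans.
  rewrite ler_wpM2r ?dot_ge0 // ler_sqr ?nnegrE ?sigma_min_ge0 //.
  by have := sigma_min_tr_row_free Bt_free; rewrite trmxK.
have D2_le : frob2 D <= (a * b * eps) ^+ 2.
  rewrite -(sqr_sqrtr (frob2_ge0 D)) ler_sqr ?nnegrE ?sqrtr_ge0 //.
  by rewrite mulr_ge0 ?mulr_ge0 ?sigma_min_ge0.
clearbody PA PB.
have Y2_le : (a * b) ^+ 2 * frob2 (PA^T *m D *m PB) <= frob2 D.
  rewrite -frob2_tr (_ : _^T = PB^T *m D^T *m PA); last by rewrite !trmx_mul trmxK mulmxA.
  rewrite exprMn -mulrA [leLHS]mulrCA; apply: le_trans (frob2_mulmx_le D PB_bound).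
  by rewrite ler_wpM2l ?sqr_ge0 // -[frob2 (D *m PB)]frob2_tr trmx_mul frob2_mulmx_le.
have [ab0|ab_neq0] := eqVneq (a * b) 0.
  have /eqP D0 : D == 0.
    by rewrite -frob2_eq0 eq_le frob2_ge0 andbT (le_trans D2_le) // ab0 mul0r expr0n.
  by rewrite Y_eq D0 mulmx0 mul0mx frob0.
rewrite Y_eq frobE -(ger0_norm eps_ge0) -sqrtr_sqr ler_sqrt ?sqr_ge0 //.
have ab_gt0 : 0 < a * b by rewrite lt_def ab_neq0 mulr_ge0 ?sigma_min_ge0.
by rewrite -(@ler_pM2l _ ((a * b) ^+ 2)) ?exprn_gt0 // (le_trans Y2_le) // -exprMn.
Qed.

Section Layers.
Variables (R : realType) (d : nat -> nat).
Implicit Types W V : forall j, 'M[R]_(d j, d j.-1).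

Lemma pre_seg W j k : pre W (k + j) = seg W j k *m pre W j.
Proof. by elim: k => [|k IHk] /=; rewrite ?mul1mx // IHk mulmxA. Qed.

Lemma pre_castmx_seg W N k j (e : (k + j)%N = N) (e' : d (k + j) = d N) :
  pre W N = castmx (e', erefl) (seg W j k) *m pre W j.
Proof. by subst N; rewrite (eq_irrelevance e' erefl) castmx_id pre_seg. Qed.

Lemma pre_topW W H js (h : (js <= H.+1)%N) : pre W H.+1 = topW W h *m pre W js.
Proof. exact: pre_castmx_seg (subnK h) (top_eq d h). Qed.

Lemma pre_pred W j : (0 < j)%N -> pre W j = W j *m pre W j.-1.
Proof. by case: j. Qed.

Lemma eq_seg V W j : (forall i, (j < i)%N -> V i = W i) -> forall k, seg V j k = seg W j k.
Proof. by move=> eqVW; elim=> [|k IHk] //=; rewrite IHk eqVW // ltnS leq_addl. Qed.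

Lemma eq_pre V W js :
  (forall i, (i < js)%N -> V i = W i) -> forall j, (j < js)%N -> pre V j = pre W j.
Proof. by move=> eqVW; elim=> [|j IHj] //= j_lt; rewrite IHj ?eqVW // ltnW. Qed.

Lemma eq_topW V W H js (h : (js <= H.+1)%N) :
  (forall i, (js < i)%N -> V i = W i) -> topW V h = topW W h.
Proof. by move=> eqVW; rewrite /topW (eq_seg eqVW). Qed.

Definition update_layer W js (Y : 'M[R]_(d js, d js.-1)) : forall j, 'M[R]_(d j, d j.-1) :=
  fun j => if js =P j is ReflectT e then eq_rect js (fun k => 'M_(d k, d k.-1)) Y j e
           else W j.

Lemma update_layer_at W js (Y : 'M[R]_(d js, d js.-1)) : update_layer W Y js = Y.
Proof. by rewrite /update_layer; case: eqP => // e; rewrite (eq_irrelevance e erefl). Qed.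

Lemma update_layer_ne W js (Y : 'M[R]_(d js, d js.-1)) j : j <> js -> update_layer W Y j = W j.
Proof. by rewrite /update_layer; case: eqP => // e /(_ (esym e)). Qed.

Lemma pre_update_layer W H js (h : (js <= H.+1)%N) (Y : 'M[R]_(d js, d js.-1)) :
  (0 < js)%N -> pre (update_layer W Y) H.+1 = topW W h *m Y *m pre W js.-1.
Proof.
move=> js_gt0; rewrite (pre_topW _ h) (@eq_topW (update_layer W Y) W); last first.
  by move=> i /gtn_eqF/eqP; apply: update_layer_ne.
rewrite (pre_pred _ js_gt0) update_layer_at (@eq_pre (update_layer W Y) W js) ?mulmxA ?prednK //.
by move=> i /ltn_eqF/eqP; apply: update_layer_ne.
Qed.

End Layers.

Theorem lemmaA6 (R : realType) (H : nat) (d : nat -> nat)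
  (W : forall j : nat, 'M[R]_(d j, d j.-1))
  (js : nat) (hjs1 : (1 <= js)%N) (hjs2 : (js <= H.+1)%N) (eps : R)
  (hH : (1 <= H)%N) (heps : 0 < eps)
  (hA : \rank (topW W hjs2) = d H.+1)
  (hB : \rank (pre W js.-1) = d 0)
  (Rm : 'M[R]_(d H.+1, d 0))
  (hR : frob (Rm - pre W H.+1)
        <= sigma_min (topW W hjs2) * sigma_min (pre W js.-1) * eps) :
  let A := topW W hjs2 in
  let B := pre W js.-1 in
  exists V : forall j : nat, 'M[R]_(d j, d j.-1),
    [/\ V js = W js + A^T *m invmx (A *m A^T) *m (Rm - pre W H.+1)
                       *m invmx (B^T *m B) *m B^T,
        (forall j, j <> js -> V j = W j),
        Rm = pre V H.+1
      & forall j, (1 <= j <= H.+1)%N -> frob (V j - W j) <= eps].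
Proof.
move=> A B; set Y := A^T *m _ *m _ *m _ *m B^T.
have A_free : row_free A by rewrite /row_free hA.
have Bt_free : row_free B^T by rewrite /row_free mxrank_tr hB.
have AYB : A *m Y *m B = Rm - pre W H.+1.
  have B_unit : B^T *m B \in unitmx by have := gram_unit Bt_free; rewrite trmxK.
  by rewrite /Y !mulmxA mulmxV ?gram_unit // mul1mx -!mulmxA mulVmx ?mulmx1.
exists (update_layer W (W js + Y)); split.
- exact: update_layer_at.
- by move=> j; apply: update_layer_ne.
- have AWB : A *m W js *m B = pre W H.+1 by rewrite -mulmxA -pre_pred // -pre_topW.
  by rewrite (pre_update_layer _ hjs2) // mulmxDr mulmxDl AWB AYB addrC subrK.
- move=> j _; have [->|j_neq] := eqVneq j js.
    by rewrite update_layer_at addrC addKr; exact: frob_pinv_le (ltW heps) hR.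
  by rewrite update_layer_ne ?subrr ?frob0 ?ltW //; exact/eqP.
Qed.
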